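(* Let $(Q,P)$ be a weakly quasi-lattice ordered group and let $\Lambda$ be a $P$-graph with $\mathrm{FA}(\Lambda)\neq\emptyset$. Then the path space $\mathcal{X}(\Lambda)$ and the boundary-path space $\partial\mathcal{X}(\Lambda)$ are Hausdorff and each has a countable basis consisting of compact sets. Moreover, $\mathcal{X}(\Lambda)$ is open in $\mathcal{F}(\Lambda)$.
   Context: A weakly quasi-lattice ordered group $(Q,P)$ consists of a discrete group $Q$ and a subsemigroup $P\subseteq Q$ containing the identity $e$ with $P\cap P^{-1}=\{e\}$, such that, with $p\le r$ meaning $pq=r$ for some $q\in P$, any two elements of $P$ having a common upper bound in $P$ have a least common upper bound. A $P$-graph is a countable small category $\Lambda$ (identity morphisms $\Lambda^{(0)}$, range and source maps $r,s$, composite $\mu\nu$ defined when $s(\mu)=r(\nu)$) with a functor $d:\Lambda\to P$ satisfying unique factorisation: whenever $d(\lambda)=pq$ with $p,q\in P$ there are unique $\mu,\nu\in\Lambda$ with $\lambda=\mu\nu$, $d(\mu)=p$, $d(\nu)=q$. Write $\lambda\Lambda=\{\lambda\mu:\mu\in\Lambda,\ s(\lambda)=r(\mu)\}$ and $\mu\preceq\lambda$ if $\lambda=\mu\nu$ for some $\nu\in\Lambda$. $\Lambda$ is finitely aligned at $(\mu,\nu)$ if there is a finite (possibly empty) $J\subseteq\Lambda$ with $\mu\Lambda\cap\nu\Lambda=\bigcup_{\lambda\in J}\lambda\Lambda$; $\Lambda$ is finitely aligned at $\lambda$ if it is finitely aligned at $(\mu,\nu)$ for all $\mu\in\lambda\Lambda$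 and $\nu\in\Lambda$; $\mathrm{FA}(\Lambda)$ is the set of $\lambda\in\Lambda$ at which $\Lambda$ is finitely aligned. The power set $\mathcal{P}(\Lambda)$ carries the product topology from its identification with $\prod_{\lambda\in\Lambda}\{0,1\}$ (each factor discrete); a basis is given by the sets $\{x\subseteq\Lambda: K_1\subseteq x\subseteq\Lambda\setminus K_2\}$ for finite $K_1,K_2\subseteq\Lambda$. Subsets of $\mathcal{P}(\Lambda)$ carry the subspace topology. A filter is a nonempty $x\subseteq\Lambda$ that is hereditary ($\lambda\preceq\mu\in x$ implies $\lambda\in x$) and directed ($\mu,\nu\in x$ implies there is $\lambda\in x$ with $\mu,\nu\preceq\lambda$); $\mathcal{F}(\Lambda)$ is the set of filters and $\mathcal{U}(\Lambda)$ the set of ultrafilters (filters maximal under inclusion). The path space is $\mathcal{X}(\Lambda)=\{x\in\mathcal{F}(\Lambda): x\cap\mathrm{FA}(\Lambda)\neq\emptyset\}$, and the boundary-path space $\partial\mathcal{X}(\Lambda)$ is the closure of $\mathcal{U}(\Lambda)\cap\mathcal{X}(\Lambda)$ in $\mathcal{X}(\Lambda)$. *)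

From HB Require Import structures.
From mathcomp Require Import all_boot all_order all_algebra.
From mathcomp Require Import monoid.
From mathcomp Require Import all_classical all_reals all_analysis.

Set Implicit Arguments.
Unset Strict Implicit.
Unset Printing Implicit Defensive.

Local Open Scope classical_set_scope.

Section WQLO.
Variable Q : groupType.

Definition wq_le (P : set Q) (p r : Q) : Prop :=
  exists2 q, P q & monoid.mul p q = r.

Definition is_WQLO (P : set Q) : Prop :=
  [/\ P monoid.one,
      (forall p q, P p -> P q -> P (monoid.mul p q)),
      (forall p, P p -> P (monoid.inv p) -> p = monoid.one) &
      (forall p q, P p -> P q ->
         (exists r, [/\ P r, wq_le P p r & wq_le P q r]) ->
         exists l, [/\ P l, wq_le P p l, wq_le P q l &
                     forall r, P r -> wq_le P p r -> wq_le P q r -> wq_le P l r])].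
End WQLO.

(** Lambda is the type of morphisms, [pg_obj]
    the set Lambda^(0) of identity morphisms, [pg_comp m n] the composite
    (only meaningful when [pg_s m = pg_r n]). *)
Record PGraph (Q : groupType) (P : set Q) (Λ : Type) := {
  pg_obj : set Λ;
  pg_r : Λ -> Λ;
  pg_s : Λ -> Λ;
  pg_comp : Λ -> Λ -> Λ;
  pg_d : Λ -> Q;
  pg_countable : countable [set: Λ];
  pg_obj_r : forall l, pg_obj (pg_r l);
  pg_obj_s : forall l, pg_obj (pg_s l);
  pg_obj_id : forall v, pg_obj v -> pg_r v = v /\ pg_s v = v;
  pg_comp_r : forall m n, pg_s m = pg_r n -> pg_r (pg_comp m n) = pg_r m;
  pg_comp_s : forall m n, pg_s m = pg_r n -> pg_s (pg_comp m n) = pg_s n;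
  pg_id_l : forall l, pg_comp (pg_r l) l = l;
  pg_id_r : forall l, pg_comp l (pg_s l) = l;
  pg_assoc : forall a b c, pg_s a = pg_r b -> pg_s b = pg_r c ->
     pg_comp (pg_comp a b) c = pg_comp a (pg_comp b c);
  pg_d_P : forall l, P (pg_d l);
  pg_d_obj : forall v, pg_obj v -> pg_d v = monoid.one;
  pg_d_comp : forall m n, pg_s m = pg_r n ->
     pg_d (pg_comp m n) = monoid.mul (pg_d m) (pg_d n);
  pg_fact : forall l p q, P p -> P q -> pg_d l = monoid.mul p q ->
     exists m n, [/\ pg_s m = pg_r n, l = pg_comp m n, pg_d m = p, pg_d n = q &
       forall m' n', pg_s m' = pg_r n' -> l = pg_comp m' n' -> pg_d m' = p ->
                     pg_d n' = q -> m' = m /\ n' = n]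
}.

Section PathSpaces.
Variables (Q : groupType) (P : set Q) (Λ : Type) (G : PGraph P Λ).

Definition pg_ext (l : Λ) : set Λ :=
  [set x | exists m, pg_s G l = pg_r G m /\ x = pg_comp G l m].

Definition pg_prec (m l : Λ) : Prop :=
  exists n, pg_s G m = pg_r G n /\ l = pg_comp G m n.

Definition fin_aligned2 (m n : Λ) : Prop :=
  exists J : set Λ, finite_set J /\
    pg_ext m `&` pg_ext n = \bigcup_(l in J) pg_ext l.

Definition fin_aligned_at (l : Λ) : Prop :=
  forall m n, pg_ext l m -> fin_aligned2 m n.

Definition FA : set Λ := [set l | fin_aligned_at l].

(* The power set P(Lambda), identified with prod_{Lambda} {0,1},
   with the product (pointwise) topology; bool carries the discrete topology. *)
Definition PowSet := {ptws Λ -> bool}.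

Definition is_pfilter (x : PowSet) : Prop :=
  [/\ exists l, x l,
      (forall l m, pg_prec l m -> x m -> x l) &
      (forall m n, x m -> x n -> exists2 l, x l & pg_prec m l /\ pg_prec n l)].

Definition FSp : set PowSet := [set x | is_pfilter x].

Definition USp : set PowSet :=
  [set x | is_pfilter x /\
     forall y : PowSet, is_pfilter y -> (forall l, x l -> y l) -> y = x].

Definition XSp : set PowSet := [set x | FSp x /\ exists l, x l /\ FA l].

Definition BdrySp : set PowSet :=
  set_val @` closure [set x : set_type XSp | USp (set_val x)].

End PathSpaces.

Definition countable_compact_basis (T : topologicalType) : Prop :=
  exists2 B : set (set T), countable B & basis B /\ B `<=` compact.

(* The power set 2^Λ with the product topology is compact Hausdorff, and its
   subspaces inherit the Hausdorff property.  The sets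
   Z(μ \ F) = {y | μ ∈ y, y ∩ F = ∅}, for μ ∈ FA(Λ) and F ⊆ Λ finite, are open
   and, restricted to X(Λ), form a countable basis (countable because Λ is).
   They are compact because the filters in Z(μ \ F) form a closed subset of
   2^Λ: a limit of such filters is still hereditary, and it is still directed
   because finite alignment at μ lets one witness a common extension of two
   paths of μΛ among finitely many candidates, i.e. by finitely many
   coordinates.  Intersecting with the closed set ∂X(Λ) keeps them compact.
   Finally X(Λ) is open in F(Λ), being the union of the open sets {y | λ ∈ y}
   for λ ∈ FA(Λ). *)

From HB Require Import structures.
From mathcomp Require Import all_boot all_order all_algebra.
From mathcomp Require Import monoid.
From mathcomp Require Import all_classical all_reals all_analysis.

Set Implicit Arguments.
Unset Strict Implicit.
Unset Printing Implicit Defensive.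

Local Open Scope classical_set_scope.

Section set_type_topology.
Variables (T : topologicalType) (A : set T).

Lemma set_val_continuous : continuous (set_val : set_type A -> T).
Proof. exact: initial_continuous. Qed.

Lemma open_preimage_set_val (V : set T) :
  open V -> open (set_val @^-1` V : set (set_type A)).
Proof. by move=> oV; exists V. Qed.

Lemma nbhs_set_type_open (x : set_type A) (N : set (set_type A)) : nbhs x N ->
  exists V : set T, [/\ open V, V (set_val x) & set_val @^-1` V `<=` N].
Proof. by rewrite nbhsE => -[_ [[V oV <-] Vx] VN]; exists V. Qed.

Lemma set_type_hausdorff : hausdorff_space T -> hausdorff_space (set_type A).
Proof.
rewrite !open_hausdorff => hT x y xy.
have vxy : set_val x != set_val y by apply: contra xy => /eqP/val_inj ->.
have [[U V] /= [Ux Vy] [oU oV /eqP UV0]] := hT _ _ vxy.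
exists (set_val @^-1` U, set_val @^-1` V) => /=.
  by split; rewrite inE /=; [move: Ux | move: Vy]; rewrite inE.
split; [exact: open_preimage_set_val | exact: open_preimage_set_val |].
apply/eqP; rewrite -subset0 => z [Uz Vz].
by have : (U `&` V) (set_val z) by [split]; rewrite UV0.
Qed.

Lemma compact_preimage_set_val (K : set T) : K `<=` A -> compact K ->
  compact (set_val @^-1` K : set (set_type A)).
Proof.
move=> KA cK; have [->|/set0P [k Kk]] := eqVneq K set0.
  by rewrite preimage_set0; exact: compact0.
(* A retraction of T onto A, continuous on A, maps K onto the preimage. *)
pose k0 : set_type A := exist _ k (mem_set (KA _ Kk)).
pose r (x : T) : set_type A :=
  if pselect (A x) is left Ax then exist _ x (mem_set Ax) else k0.
have rK z : r (set_val z) = z.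
  rewrite /r; case: pselect => Az; first exact: val_inj.
  by case: Az; exact: set_valP.
have valr x : A x -> set_val (r x) = x by rewrite /r; case: pselect.
have r_cont : {within A, continuous r}.
  apply/subspace_sigL_continuousP.
  have -> : sigL A r = id by apply: funext => z; rewrite /sigL /= rK.
  by move=> z.
have -> : set_val @^-1` K = r @` K.
  apply/seteqP; split => [z Kz | _ [x Kx <-]].
    by exists (set_val z); rewrite ?rK.
  by rewrite /= valr //; exact: (KA _ Kx).
exact: continuous_compact (continuous_subspaceW KA r_cont) cK.
Qed.

End set_type_topology.

Section power_set.
Variable Λ : Type.
Implicit Types (x y z : PowSet Λ) (F : set Λ).

Lemma power_set_compact : compact [set: PowSet Λ].
Proof.
have := @tychonoff {classic Λ} (fun _ => bool) (fun _ => setT)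
  (fun _ => bool_compact).
by congr compact; apply/seteqP.
Qed.

Lemma power_set_hausdorff : hausdorff_space (PowSet Λ).
Proof.
exact: (@hausdorff_product {classic Λ} (fun _ => bool)
  (fun _ => discrete_hausdorff)).
Qed.

Lemma nbhs_coord y l : nbhs y [set z | z l = y l].
Proof.
apply: (@proj_continuous {classic Λ} (fun _ => bool) l y [set y l]).
exact: discrete_set1.
Qed.

Definition agree_on y F : set (PowSet Λ) :=
  [set z | forall l, F l -> z l = y l].

Lemma nbhs_agree_on y F : finite_set F -> nbhs y (agree_on y F).
Proof.
move=> /(@finite_seqP {classic Λ}) [s ->]; elim: s => [|a s IHs].
  by apply: filterS filterT => z _ l.
apply: filterS (filterI (nbhs_coord y a) IHs) => z [za zs] l /=.
by rewrite inE => /orP [/eqP -> // | ls]; exact: zs.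
Qed.

Lemma nbhs_agree_onP y S :
  nbhs y S <-> exists2 F, finite_set F & agree_on y F `<=` S.
Proof.
split => [yS | [F fF FS]]; last exact: filterS FS (nbhs_agree_on y fF).
pose Fy := filter_from [set F : set Λ | finite_set F] (agree_on y).
have Fy_filter : Filter Fy.
  apply: filter_from_filter; first by exists set0; exact: finite_set0.
  move=> F1 F2 fF1 fF2; exists (F1 `|` F2); first by rewrite /= finite_setU.
  by move=> z yz; split => l Fl; apply: yz; [left | right].
suff : Fy --> y by move/(_ S yS).
apply/(@cvg_sup (PowSet Λ) Λ) => l B.
change (nbhs (y : initial_topology (fun f : PowSet Λ => f l)) B -> Fy B).
rewrite nbhsE => -[_ [[V _ <-] Vyl] VB].
exists [set l] => [|z /= yz]; first exact: finite_set1.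
by apply: VB; rewrite /= yz.
Qed.

Lemma closure_agree_on S y F : closure S y -> finite_set F ->
  exists2 z, S z & agree_on y F z.
Proof. by move=> Sy /(nbhs_agree_on y) /Sy [z []]; exists z. Qed.

Definition cylinder (mu : Λ) F : set (PowSet Λ) :=
  [set y | y mu /\ forall nu, F nu -> ~ y nu].

Lemma open_cylinder mu F : finite_set F -> open (cylinder mu F).
Proof.
move=> fF; rewrite openE => y [ymu yF].
apply: filterS (nbhs_agree_on y (_ : finite_set (mu |` F))).
  move=> z yz; split; first by rewrite yz //; left.
  by move=> nu Fnu; rewrite yz; [exact: yF | right].
by rewrite finite_setU.
Qed.

End power_set.

Section pgraph.
Variables (Q : groupType) (P : set Q) (Λ : Type) (G : PGraph P Λ).
Implicit Types (x y z : PowSet Λ) (F : set Λ) (A : set (PowSet Λ)).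

Lemma pg_prec_refl l : pg_prec G l l.
Proof.
exists (pg_s G l); split; last by rewrite pg_id_r.
by have [-> _] := pg_obj_id (pg_obj_s G l).
Qed.

Lemma pg_prec_trans a b c : pg_prec G a b -> pg_prec G b c -> pg_prec G a c.
Proof.
move=> [m [sam ->]] [n [sbn ->]].
have smn : pg_s G m = pg_r G n by rewrite -sbn pg_comp_s.
by exists (pg_comp G m n); rewrite pg_comp_r // pg_assoc.
Qed.

Lemma FA_prec l m : FA G l -> pg_prec G l m -> FA G m.
Proof. by move=> FAl lm a b /(pg_prec_trans lm); exact: FAl. Qed.

Lemma pfilter_hereditary x l m : FSp G x -> pg_prec G l m -> x m -> x l.
Proof. by move=> [_ + _]; apply. Qed.

Lemma pfilter_finite_ub x lam S : FSp G x -> x lam -> finite_set S ->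
  (forall l, S l -> x l) ->
  exists mu, [/\ x mu, pg_prec G lam mu & forall l, S l -> pg_prec G l mu].
Proof.
move=> [_ _ xdir] xlam /(@finite_seqP {classic Λ}) [s ->] {S}.
elim: s => [|a s IHs] sx.
  by exists lam; split=> //; exact: pg_prec_refl.
have [|mu [xmu lammu smu]] := IHs.
  by move=> l /= ls; apply: sx; rewrite /= inE ls orbT.
have [j xj [muj aj]] := xdir mu a xmu (sx a (mem_head _ _)).
exists j; split=> //; first exact: pg_prec_trans muj.
move=> l /=; rewrite inE => /orP [/eqP -> // | ls].
exact: pg_prec_trans (smu l ls) muj.
Qed.

Section closure_of_cylinder.
Variables (mu : Λ) (F : set Λ) (y : PowSet Λ).
Hypothesis y_closure : closure (FSp G `&` cylinder mu F) y.

Lemma closure_cylinder_sub : cylinder mu F y.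
Proof.
split=> [|nu Fnu].
  have [z [_ [zmu _]] yz] := closure_agree_on y_closure (finite_set1 mu).
  by rewrite -(yz mu).
have [z [_ [_ zF]] yz] := closure_agree_on y_closure (finite_set1 nu).
by rewrite -(yz nu) //; exact: zF.
Qed.

Lemma closure_cylinder_hereditary l m : pg_prec G l m -> y m -> y l.
Proof.
move=> lm ym.
have [z [zF _] yz] := closure_agree_on y_closure (finite_set2 l m).
rewrite -(yz l); last by left.
by apply: pfilter_hereditary zF lm _; rewrite yz //; right.
Qed.

Hypothesis FA_mu : FA G mu.

Lemma closure_cylinder_common_ext a b : pg_ext G mu a -> y a -> y b ->
  exists2 j, y j & pg_prec G a j /\ pg_prec G b j.
Proof.
move=> mua ya yb; have [J [fJ abJ]] := FA_mu b mua.
have fabJ : finite_set ([set a; b] `|` J) by rewrite finite_setU.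
have [z [[_ zhered zdir] _] yz] := closure_agree_on y_closure fabJ.
have za : z a by rewrite yz //; left; left.
have zb : z b by rewrite yz //; left; right.
have [l zl [al bl]] := zdir a b za zb.
have : (pg_ext G a `&` pg_ext G b) l by [].
rewrite abJ => -[j Jj jl]; exists j.
  by rewrite -(yz j); [exact: zhered jl zl | right].
have : (\bigcup_(i in J) pg_ext G i) j by exists j => //; exact: pg_prec_refl.
by rewrite -abJ.
Qed.

Lemma closure_cylinder_pfilter : FSp G y.
Proof.
have [ymu _] := closure_cylinder_sub.
split; [by exists mu | exact: closure_cylinder_hereditary |].
move=> m n ym yn.
have mumu := pg_prec_refl mu.
have [j1 yj1 [muj1 mj1]] := closure_cylinder_common_ext mumu ymu ym.
have [j2 yj2 [muj2 nj2]] := closure_cylinder_common_ext mumu ymu yn.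
have [j yj [j1j j2j]] := closure_cylinder_common_ext muj1 yj1 yj2.
by exists j => //; split; [exact: pg_prec_trans j1j | exact: pg_prec_trans j2j].
Qed.

End closure_of_cylinder.

Lemma closed_pfilter_cylinder mu F :
  FA G mu -> closed (FSp G `&` cylinder mu F).
Proof.
move=> FA_mu y y_closure; split; last exact: closure_cylinder_sub.
exact: closure_cylinder_pfilter y_closure FA_mu.
Qed.

Lemma path_cylinderE mu F : FA G mu ->
  XSp G `&` cylinder mu F = FSp G `&` cylinder mu F.
Proof.
move=> FA_mu; apply/seteqP; split => y [Fy cy]; split=> //; first by case: Fy.
by split=> //; exists mu; case: cy.
Qed.

Lemma compact_path_cylinder mu F : FA G mu -> compact (XSp G `&` cylinder mu F).
Proof.
move=> FA_mu; rewrite path_cylinderE //.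
have cF := closed_pfilter_cylinder (F := F) FA_mu.
by apply: (subclosed_compact cF (@power_set_compact Λ)).
Qed.

Lemma compact_boundary_cylinder mu F : FA G mu ->
  compact (BdrySp G `&` cylinder mu F).
Proof.
move=> FA_mu; set U := [set x : set_type (XSp G) | USp G (set_val x)].
have -> : BdrySp G `&` cylinder mu F =
    set_val @` (closure U `&` set_val @^-1` (XSp G `&` cylinder mu F)).
  apply/seteqP; split => [_ [[x Ux <-] cx] | _ [x [Ux [_ cx]] <-]].
    by exists x => //; split=> //; split=> //; exact: set_valP.
  by split=> //; exists x.
apply: continuous_compact; first exact/continuous_subspaceT/set_val_continuous.
rewrite setIC; apply: compact_closedI; last exact: closed_closure.
apply: compact_preimage_set_val; first by move=> ? [].
exact: compact_path_cylinder.
Qed.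

Lemma open_path_space : open [set x : set_type (FSp G) | XSp G (set_val x)].
Proof.
have -> : [set x : set_type (FSp G) | XSp G (set_val x)] =
    set_val @^-1` [set y : PowSet Λ | exists l, y l /\ FA G l].
  by apply/seteqP; split => x /= => [[] | ] // Xx; split=> //; exact: set_valP.
apply: open_preimage_set_val; rewrite openE => y [l [yl FA_l]].
by apply: filterS (nbhs_coord y l) => z /= zl; exists l; rewrite zl.
Qed.

Definition cylinder_basis (A : set (PowSet Λ)) : set (set (set_type A)) :=
  [set set_val @^-1` cylinder p.1 p.2 | p in FA G `*` [set F | finite_set F]].
Arguments cylinder_basis : clear implicits.

Lemma countable_cylinder_basis A : countable (cylinder_basis A).
Proof.
apply: sub_countable (card_image_le _ _) _; apply: countableX.
  exact: sub_countable (subset_card_le (subsetT _)) (pg_countable G).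
apply: sub_countable (countable_finite_subset (pg_countable G)).
by apply: subset_card_le => F fF.
Qed.

Lemma open_cylinder_basis A : cylinder_basis A `<=` open.
Proof.
by move=> _ [[mu F] [_ fF] <-]; exact/open_preimage_set_val/open_cylinder.
Qed.

Lemma pfilter_cylinder_agree_on x z F mu : FSp G z ->
  (forall l, F l -> x l -> pg_prec G l mu) ->
  cylinder mu [set l | F l /\ ~ x l] z -> agree_on x F z.
Proof.
move=> Fz Fmu [zmu zF] l Fl; have [xl | nxl] := boolP (x l).
  exact: pfilter_hereditary Fz (Fmu l Fl xl) zmu.
by apply/negbTE/negP => zl; apply: (zF l) => //; split=> //; exact/negP.
Qed.

Lemma nbhs_cylinder_basis A (x : set_type A) N : A `<=` XSp G -> nbhs x N ->
  exists2 B, cylinder_basis A B & B x /\ B `<=` N.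
Proof.
move=> AX /nbhs_set_type_open [V [oV Vx VN]].
have /nbhs_agree_onP [F fF FV] : nbhs (set_val x) V.
  by move: oV; rewrite openE; exact.
have [Fx [lam [xlam FA_lam]]] := AX _ (set_valP x).
have [|mu [xmu lammu Fmu]] := pfilter_finite_ub Fx xlam
  (_ : finite_set [set l | F l /\ set_val x l]) (fun l => @proj2 _ _).
  by apply: sub_finite_set fF => l [].
exists (set_val @^-1` cylinder mu [set l | F l /\ ~ set_val x l]).
  exists (mu, [set l | F l /\ ~ set_val x l]) => //.
  split; first exact: FA_prec FA_lam lammu.
  by apply: sub_finite_set fF => l [].
split=> [|z zmu]; first by split=> // nu [].
apply/VN/FV; apply: pfilter_cylinder_agree_on zmu => [|l Fl xl].
  by case: (AX _ (set_valP z)).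
exact: Fmu.
Qed.

Lemma compact_cylinder_basis A :
  (forall mu F, FA G mu -> finite_set F -> compact (A `&` cylinder mu F)) ->
  cylinder_basis A `<=` compact.
Proof.
move=> cA _ [[mu F] [FA_mu fF] <-].
have -> : set_val @^-1` cylinder mu F =
    set_val @^-1` (A `&` cylinder mu F) :> set (set_type A).
  by apply/seteqP; split=> z /= => [cz | []] //; split=> //; exact: set_valP.
by apply: compact_preimage_set_val; [move=> ? [] | exact: cA].
Qed.

Lemma cylinder_countable_compact_basis A : A `<=` XSp G ->
  (forall mu F, FA G mu -> finite_set F -> compact (A `&` cylinder mu F)) ->
  countable_compact_basis (set_type A).
Proof.
move=> AX cA; exists (cylinder_basis A); first exact: countable_cylinder_basis.
split; last exact: compact_cylinder_basis.
split=> [|x N /(nbhs_cylinder_basis AX) [B AB [Bx BN]]].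
  exact: open_cylinder_basis.
by exists B.
Qed.

End pgraph.

Theorem theorem4p9 (Q : groupType) (P : set Q) (Λ : Type) (G : PGraph P Λ) :
  is_WQLO P ->
  FA G !=set0 ->
  [/\ hausdorff_space (set_type (XSp G)),
      countable_compact_basis (set_type (XSp G)),
      hausdorff_space (set_type (BdrySp G)),
      countable_compact_basis (set_type (BdrySp G)) &
      open [set x : set_type (FSp G) | XSp G (set_val x)]].
Proof.
move=> _ _; split.
- exact/set_type_hausdorff/power_set_hausdorff.
- apply: (cylinder_countable_compact_basis (G := G)) => // mu F FA_mu _.
  exact: compact_path_cylinder.
- exact/set_type_hausdorff/power_set_hausdorff.
- apply: (cylinder_countable_compact_basis (G := G)).
    by move=> _ [x _ <-]; exact: set_valP.
  by move=> mu F FA_mu _; exact: compact_boundary_cylinder.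
- exact: open_path_space.
Qed.
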